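(* Let $\tau>0$ and $\mathbf A\in\mathcal S_{++}^n$. A pair $(\mathbf W_\ast,\mathbf M_\ast)$ lies in $\mathcal E$ if and only if $\mathbf W_\ast=\mathbf U\mathbf S\mathbf V^\top$ and $\mathbf M_\ast=\mathbf U\mathbf S\mathbf U^\top$, where: - $\mathbf U$ is a $k\times k$ orthogonal matrix; - $\mathbf V$ is an $n\times k$ matrix whose columns are orthonormal eigenvectors of $\mathbf A$; - $\mathbf S$ is the $k\times k$ diagonal matrix whose $i$-th diagonal entry is the eigenvalue of $\mathbf A$ for the $i$-th column of $\mathbf V$.
   Context: Let $n>k\ge 1$ be integers. Let $\mathbf A$ be an $n\times n$ symmetric positive definite matrix; write $\mathbf A\in\mathcal S_{++}^n$. Here $\mathcal S_{++}^m$ denotes the $m\times m$ symmetric positive definite matrices, and $\mathcal D:=\mathbb R^{k\times n}\times\mathcal S_{++}^k$. For a parameter $\tau>0$, consider the ODE $(\ast)$ on $\mathcal D$: $$\tfrac12\tfrac{d\mathbf W}{dt}=\mathbf M^{-1}\mathbf W\mathbf A-\mathbf W,\qquad \tau\tfrac{d\mathbf M}{dt}=\mathbf M^{-1}\mathbf W\mathbf A\mathbf W^\top\mathbf M^{-1}-\mathbf M.$$ $\mathcal E$ is the set of equilibria of $(\ast)$, i.e. the set of $(\mathbf W,\mathbf M)\in\mathcal D$ with $\mathbf M^{-1}\mathbf W\mathbf A=\mathbf W$ and $\mathbf M^{-1}\mathbf W\mathbf A\mathbf W^\top\mathbf M^{-1}=\mathbf M$. *)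

From HB Require Import structures.
From mathcomp Require Import all_boot all_order all_algebra.
From mathcomp Require Import reals.
Set Implicit Arguments. Unset Strict Implicit. Unset Printing Implicit Defensive.
Import Order.TTheory GRing.Theory Num.Theory.
Local Open Scope ring_scope.

Definition spd_mx (R : realType) (m : nat) (A : 'M[R]_m) : Prop :=
  A^T = A /\ (forall x : 'cV[R]_m, x != 0 -> 0 < (x^T *m A *m x) 0 0).

Definition orthogonal_mx (R : realType) (k : nat) (U : 'M[R]_k) : Prop :=
  U^T *m U = 1%:M /\ U *m U^T = 1%:M.

Definition in_D (R : realType) (k n : nat) (W : 'M[R]_(k, n)) (M : 'M[R]_k) : Prop :=
  spd_mx M.

(* the set E of equilibria of the ODE (star) *)
Definition in_E (R : realType) (k n : nat) (A : 'M[R]_n)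
    (W : 'M[R]_(k, n)) (M : 'M[R]_k) : Prop :=
  in_D W M /\
  invmx M *m W *m A = W /\
  invmx M *m W *m A *m W^T *m invmx M = M.

From HB Require Import structures.
From mathcomp Require Import all_boot all_order all_algebra.
From mathcomp Require Import reals ring.
From mathcomp Require Import complex spectral.
Set Implicit Arguments. Unset Strict Implicit. Unset Printing Implicit Defensive.
Import Order.TTheory GRing.Theory Num.Theory.
Local Open Scope ring_scope.

(* Diagonalize M = U S U^T by an orthogonal U (the real spectral theorem,
   proved by Householder deflation).  The equilibrium equations say
   W A = M W and W W^T = M^2, so the columns of V := W^T U S^-1 are
   orthonormal and, by W A = M W and the symmetry of A, eigenvectors of A with
   eigenvalues S; conversely such U, V, S satisfy the equations directly, and
   positivity of A (resp. M) is what makes S invertible.  Neither tau nor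
   the bounds on k play any role. *)

Section RowNorm.
Variables (R : realDomainType) (n : nat).
Implicit Type u : 'rV[R]_n.

Lemma row_sqnormE u : (u *m u^T) 0 0 = \sum_j u 0 j ^+ 2.
Proof. by rewrite mxE; apply: eq_bigr => j _; rewrite mxE expr2. Qed.

Lemma row_sqnorm_ge0 u : 0 <= (u *m u^T) 0 0.
Proof. by rewrite row_sqnormE sumr_ge0 // => j _; rewrite sqr_ge0. Qed.

Lemma row_sqnorm_gt0 u : u != 0 -> 0 < (u *m u^T) 0 0.
Proof.
move=> unz; rewrite lt_def row_sqnorm_ge0 andbT; apply: contra unz.
rewrite row_sqnormE => /eqP /psumr_eq0P u0; apply/eqP/rowP => j.
by apply/eqP; rewrite mxE -sqrf_eq0 u0 // => i _; rewrite sqr_ge0.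
Qed.

End RowNorm.

Section Householder.
Variable R : realFieldType.

Lemma reflection_sym_invol n (w : 'rV[R]_n) : w != 0 ->
  let H := 1%:M - (2 / (w *m w^T) 0 0) *: (w^T *m w) in
  H^T = H /\ H *m H = 1%:M.
Proof.
move=> wnz H; set c := (w *m w^T) 0 0; set k := 2 / c.
have c_neq0 : c != 0 by rewrite gt_eqF // row_sqnorm_gt0.
have wwT : w *m w^T = c%:M by apply: mx11_scalar.
split; first by rewrite /H linearB /= trmx1 linearZ /= trmx_mul trmxK.
rewrite /H -/c -/k mulmxBl mul1mx mulmxBr mulmx1 -!scalemxAl -!scalemxAr scalerA.
rewrite !mulmxA -(mulmxA _ w) wwT mul_mx_scalar -scalemxAl scalerA.
have -> : k * k * c = k + k by rewrite /k; field.
by rewrite scalerDl opprB addrK subrK.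
Qed.

Lemma householder n (v : 'rV[R]_n.+1) : (v *m v^T) 0 0 = 1 ->
  exists H : 'M[R]_n.+1, [/\ H^T = H, H *m H = 1%:M & row 0 H = v].
Proof.
move=> v1; pose e : 'rV[R]_n.+1 := delta_mx 0 0.
have [-> | ne] := eqVneq v e.
  by exists 1%:M; rewrite trmx1 mulmx1 rowE mulmx1.
pose w := e - v; have wnz : w != 0 by rewrite subr_eq0 eq_sym.
have [sH HH] := reflection_sym_invol wnz.
set c := (w *m w^T) 0 0 in sH HH *.
exists (1%:M - (2 / c) *: (w^T *m w)); split => //.
(* [e w^T = 1 - v_0] and [w w^T = 2 (1 - v_0)], so [H] maps [e] to [e - w = v]. *)
have eyE (y : 'rV[R]_n.+1) : (e *m y^T) 0 0 = y 0 0 by rewrite /e -rowE !mxE.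
have yeE (y : 'rV[R]_n.+1) : (y *m e^T) 0 0 = y 0 0.
  by rewrite /e trmx_delta -colE !mxE.
have ew : (e *m w^T) 0 0 = 1 - v 0 0 by rewrite eyE !mxE eqxx.
have ce : c = 2 * (1 - v 0 0).
  rewrite /c /w linearB /= mulmxBl !mulmxBr [e *m e^T]mx11_scalar.
  rewrite [e *m v^T]mx11_scalar [v *m e^T]mx11_scalar [v *m v^T]mx11_scalar.
  by rewrite !eyE yeE v1 !mxE eqxx /=; ring.
have v0_neq1 : 1 - v 0 0 != 0.
  by have := row_sqnorm_gt0 wnz; rewrite -/c ce pmulr_rgt0 // => /gt_eqF ->.
rewrite rowE mulmxBr mulmx1 -scalemxAr mulmxA [_ *m w^T]mx11_scalar ew.
rewrite mul_scalar_mx scalerA ce.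
have -> : 2 / (2 * (1 - v 0 0)) * (1 - v 0 0) = 1 by field; rewrite ?pnatr_eq0 ?v0_neq1.
by rewrite scale1r /w opprB addrC subrK.
Qed.

End Householder.

Section SymmetricSpectral.
Variable R : rcfType.

(* The complexification of a real symmetric matrix is hermitian, so its
   eigenvalues are real; a real eigenvalue has a real eigenvector. *)
Lemma sym_eigenvector n (M : 'M[R]_n.+1) : M^T = M ->
  exists a (v : 'rV_n.+1), v != 0 /\ v *m M = a *: v.
Proof.
move=> sM; pose f := real_complex R; pose Mc := map_mx f M.
have herm : Mc \is hermsymmx.
  apply: realsym_hermsym.
    apply/is_hermitianmxP; rewrite expr0 scale1r map_mx_id //.
    by rewrite /Mc map_trmx sM.
  by apply/mxOverP => i j; rewrite mxE; apply/complex_realP; exists (M i j).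
have /orthomx_spectralP eqM := hermitian_normalmx herm.
have Pu : spectralmx Mc \in unitmx by apply: spectral_unit.
pose d := spectral_diag Mc 0 0.
have [a da] : exists a, f a = d.
  by exists (complex.Re d); apply/RRe_real/(mxOverP (hermitian_spectral_diag_real herm)).
have eig_d : \det (Mc - d%:M) == 0.
  apply/det0P; exists (row 0 (spectralmx Mc)); last apply/eqP.
    rewrite rowE mulmx_free_eq0 ?row_free_unit //.
    by apply/eqP => /matrixP/(_ 0 0)/eqP; rewrite !mxE eqxx oner_eq0.
  rewrite mulmxBr mul_mx_scalar -row_mul {2}eqM !mulmxA mulmxV // mul1mx.
  by rewrite row_mul -row_mul mul_diag_mx subr_eq0; apply/eqP/rowP => j; rewrite !mxE.
move: eig_d; rewrite -da -map_scalar_mx -map_mxB det_map_mx fmorph_eq0.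
case/det0P => v vnz; rewrite mulmxBr mul_mx_scalar => /eqP; rewrite subr_eq0 => /eqP vM.
by exists a, v.
Qed.

Lemma sym_unit_eigenvector n (M : 'M[R]_n.+1) : M^T = M ->
  exists a (v : 'rV_n.+1), (v *m v^T) 0 0 = 1 /\ v *m M = a *: v.
Proof.
move=> /sym_eigenvector [a [u [unz uM]]]; set c := (u *m u^T) 0 0.
have c_gt0 : 0 < c := row_sqnorm_gt0 unz.
exists a, ((Num.sqrt c)^-1 *: u); split; last by rewrite -scalemxAl uM !scalerA mulrC.
rewrite linearZ /= -scalemxAl -scalemxAr mxE [X in _ * X]mxE -/c mulrA.
by rewrite -invfM -expr2 sqr_sqrtr ?ltW // mulVf ?gt_eqF.
Qed.

End SymmetricSpectral.

Lemma sym_row0_block (R : pzRingType) n (B : 'M[R]_(1 + n)) a :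
  B^T = B -> row 0 B = a *: row 0 1%:M -> B = block_mx a%:M 0 0 (drsubmx B).
Proof.
move=> sB rB; have l0 : lshift n (0 : 'I_1) = 0 by apply: val_inj.
have ur : ursubmx B = 0.
  apply/matrixP => i j; rewrite ord1 !mxE l0.
  have := congr1 (fun r : 'rV_(1 + n) => r 0 (rshift 1 j)) rB; rewrite !mxE /=.
  by move=> ->; rewrite mulr0.
have dl : dlsubmx B = 0 by rewrite -sB -trmx_ursub ur trmx0.
have ul : ulsubmx B = a%:M.
  apply/matrixP => i j; rewrite !ord1 !mxE /=.
  have := congr1 (fun r : 'rV_(1 + n) => r 0 0) rB; rewrite !mxE /=.
  by rewrite l0 mulr1 mulr1n.
by rewrite -ul -ur -dl submxK.
Qed.

Section BlockDiag.
Variables (R : comPzRingType) (n : nat) (U : 'M[R]_n).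
Let Ub : 'M[R]_(1 + n) := block_mx 1%:M 0 0 U.

Lemma trmx_block1_mul : U^T *m U = 1%:M -> Ub^T *m Ub = 1%:M.
Proof.
move=> UU; rewrite /Ub tr_block_mx !trmx0 trmx1 mulmx_block.
by rewrite !mulmx0 !mul0mx !mulmx1 !addr0 !add0r UU -scalar_mx_block.
Qed.

Lemma block1_conj_diag a (s : 'rV[R]_n) :
  block_mx a%:M 0 0 (U *m diag_mx s *m U^T) =
  Ub *m diag_mx (row_mx a%:M s) *m Ub^T.
Proof.
rewrite /Ub diag_mx_row tr_block_mx !trmx0 trmx1 !mulmx_block.
have -> : diag_mx (a%:M : 'rV_1) = a%:M by apply/matrixP => i j; rewrite !ord1 !mxE.
by rewrite !mulmx0 !mul0mx !mulmx1 !mul1mx !addr0 !add0r ?mul0mx.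
Qed.

End BlockDiag.

Lemma sym_spectral (R : rcfType) n (M : 'M[R]_n) : M^T = M ->
  exists (U : 'M[R]_n) (s : 'rV[R]_n),
    U^T *m U = 1%:M /\ M = U *m diag_mx s *m U^T.
Proof.
elim: n M => [|n IHn] M sM; first by exists 1%:M, 0; split; apply/matrixP => -[].
have [a [v [v1 vM]]] := sym_unit_eigenvector sM.
have [H [sH HH rH]] := householder v1.
(* [H M H] has first row [a e_0]; deflate to the lower right block. *)
pose B : 'M_(1 + n) := H *m M *m H.
have sB : B^T = B by rewrite /B !trmx_mul sH sM mulmxA.
have rB : row 0 B = a *: row 0 1%:M.
  by rewrite /B !row_mul rH vM -scalemxAl -rH -row_mul HH.
have sB' : (drsubmx B)^T = drsubmx B by rewrite trmx_drsub sB.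
have [U [s [UU eB]]] := IHn _ sB'.
exists (H *m (block_mx 1%:M 0 0 U : 'M_(1 + n))), (row_mx a%:M s); split.
  by rewrite trmx_mul sH mulmxA -[_ *m H *m H]mulmxA HH mulmx1 trmx_block1_mul.
have eM : M = H *m B *m H by rewrite /B !mulmxA HH mul1mx -mulmxA HH mulmx1.
by rewrite eM (sym_row0_block sB rB) eB block1_conj_diag trmx_mul sH !mulmxA.
Qed.

Section MatrixFacts.
Variable R : comPzRingType.

Lemma quad_colE m k (X : 'M[R]_m) (P : 'M[R]_(m, k)) i :
  ((col i P)^T *m X *m col i P) 0 0 = (P^T *m X *m P) i i.
Proof.
rewrite !colE trmx_mul trmx_delta !mulmxA -rowE -!row_mul -colE.
by rewrite [LHS]mxE [LHS]mxE.
Qed.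

Lemma diag_quadE k (s : 'rV[R]_k) (y : 'cV[R]_k) :
  (y^T *m diag_mx s *m y) 0 0 = \sum_i s 0 i * y i 0 ^+ 2.
Proof.
rewrite mul_mx_diag mxE; apply: eq_bigr => i _; rewrite !mxE.
by rewrite mulrCA mulrA; congr (_ * _ * _); rewrite mxE.
Qed.

Lemma eigen_colsP n k (A : 'M[R]_n) (V : 'M[R]_(n, k)) (s : 'rV[R]_k) :
  (forall i, A *m col i V = s 0 i *: col i V) <-> A *m V = V *m diag_mx s.
Proof.
have colM j : A *m col j V = col j (A *m V) by rewrite !colE mulmxA.
split=> [Acol | AV i].
  apply/matrixP => r j; have := congr1 (fun c : 'cV_n => c r 0) (Acol j).
  by rewrite colM mul_mx_diag !mxE mulrC.
by rewrite colM AV mul_mx_diag; apply/colP => r; rewrite !mxE mulrC.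
Qed.

End MatrixFacts.

Lemma mulmx1_invmx (R : comUnitRingType) n (A B : 'M[R]_n) :
  A *m B = 1%:M -> invmx A = B.
Proof.
move=> AB; have [Au _] := mulmx1_unit AB.
by rewrite -[invmx A]mulmx1 -AB mulmxA mulVmx // mul1mx.
Qed.

Lemma diag_mx_mulV (R : fieldType) k (s : 'rV[R]_k) : (forall i, s 0 i != 0) ->
  diag_mx s *m diag_mx (\row_i (s 0 i)^-1) = 1%:M.
Proof.
move=> s_neq0; apply/matrixP => i j; rewrite mul_diag_mx !mxE.
by case: eqVneq => [->|]; rewrite ?mulr1n ?mulr0n ?mulr0 ?mulfV.
Qed.

Lemma diag_quad_gt0 (R : realDomainType) k (s : 'rV[R]_k) (y : 'cV[R]_k) :
  (forall i, 0 < s 0 i) -> y != 0 -> 0 < (y^T *m diag_mx s *m y) 0 0.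
Proof.
move=> s_gt0 ynz; rewrite diag_quadE.
have [i yi] : exists i, y i 0 != 0.
  apply/existsP; apply: contraR ynz; rewrite negb_exists => /forallP y0.
  by apply/eqP/matrixP => i j; rewrite ord1 mxE; apply/eqP; rewrite -[_ == _]negbK y0.
rewrite (bigD1 i) //= ltr_pwDl ?sumr_ge0 // => [|j _].
  by rewrite mulr_gt0 // exprn_even_gt0.
by rewrite mulr_ge0 ?sqr_ge0 ?ltW.
Qed.

Section PositiveDefinite.
Variable R : realType.

Lemma spd_unitmx k (M : 'M[R]_k) : spd_mx M -> M \in unitmx.
Proof.
case=> _ pdM; rewrite unitmxE unitfE; apply/negP => /det0P [v vnz vM].
have := pdM v^T; rewrite trmx_eq0 trmxK vM mul0mx mxE ltxx.
by move/(_ vnz).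
Qed.

Lemma spd_orthonormal_diag_gt0 m k (X : 'M[R]_m) (P : 'M[R]_(m, k)) i :
  spd_mx X -> P^T *m P = 1%:M -> 0 < (P^T *m X *m P) i i.
Proof.
case=> _ pdX PP; rewrite -quad_colE pdX //; apply/eqP => Pi0.
have := quad_colE 1%:M P i; rewrite Pi0 mulmx0 mulmx1 PP !mxE eqxx.
by move/eqP; rewrite eq_sym oner_eq0.
Qed.

Lemma spd_orthogonal_diag k (U : 'M[R]_k) (s : 'rV[R]_k) :
  U^T *m U = 1%:M -> (forall i, 0 < s 0 i) -> spd_mx (U *m diag_mx s *m U^T).
Proof.
move=> UU s_gt0; split; first by rewrite !trmx_mul trmxK tr_diag_mx mulmxA.
move=> x xnz; have UtX : U^T *m x != 0.
  by apply: contra xnz => /eqP Ux0; rewrite -[x]mul1mx -(mulmx1C UU) -mulmxA Ux0 mulmx0.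
by have := diag_quad_gt0 s_gt0 UtX; rewrite trmx_mul trmxK !mulmxA.
Qed.

End PositiveDefinite.

Section Equilibria.
Variables (R : realType) (n k : nat) (A : 'M[R]_n).

Lemma equilibrium_spectral (W : 'M[R]_(k, n)) (M : 'M[R]_k) :
  A^T = A -> in_E A W M ->
  exists (U : 'M[R]_k) (V : 'M[R]_(n, k)) (s : 'rV[R]_k),
    [/\ orthogonal_mx U,
        V^T *m V = 1%:M,
        (forall i : 'I_k, A *m col i V = s 0 i *: col i V),
        W = U *m diag_mx s *m V^T
      & M = U *m diag_mx s *m U^T].
Proof.
move=> sA [spdM [WAW MWAWM]]; have Mu := spd_unitmx spdM.
have WA : W *m A = M *m W by rewrite -{2}WAW !mulmxA mulmxV // mul1mx.
have WWt : W *m W^T = M *m M by rewrite -{1}MWAWM WAW mulmxKV.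
have [U [s [UU eM]]] := sym_spectral spdM.1.
have UUt := mulmx1C UU.
have MU : M *m U = U *m diag_mx s by rewrite eM -[_ *m U^T *m U]mulmxA UU mulmx1.
have UtMU : U^T *m M *m U = diag_mx s by rewrite -mulmxA MU mulmxA UU mul1mx.
have s_gt0 i : 0 < s 0 i.
  by have := spd_orthonormal_diag_gt0 i spdM UU; rewrite UtMU mxE eqxx mulr1n.
have DDi := diag_mx_mulV (fun i => lt0r_neq0 (s_gt0 i)).
have DiD := mulmx1C DDi.
set D := diag_mx s in eM MU UtMU DDi DiD *; set Di := diag_mx _ in DDi DiD.
(* The eigenvectors are read off from [W^T U = V D]. *)
pose V := W^T *m U *m Di.
have AV : A *m V = V *m D.
  rewrite /V !mulmxA -sA -trmx_mul WA trmx_mul spdM.1 eM !mulmxA.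
  by rewrite -[_ *m U^T *m U]mulmxA UU mulmx1 -!mulmxA DiD DDi.
exists U, V, s; split => //.
- rewrite /V !trmx_mul trmxK tr_diag_mx !mulmxA -[_ *m W *m W^T]mulmxA WWt -/Di.
  rewrite !mulmxA -[_ *m M *m U]mulmxA MU mulmxA -[_ *m M *m U]mulmxA MU.
  by rewrite mulmxA -[_ *m U^T *m U]mulmxA UU mulmx1 DiD mul1mx DDi.
- exact/eigen_colsP.
- rewrite /V !trmx_mul trmxK tr_diag_mx -/Di !mulmxA.
  by rewrite -[U *m D *m Di]mulmxA DDi mulmx1 UUt mul1mx.
Qed.

Lemma spectral_equilibrium (U : 'M[R]_k) (V : 'M[R]_(n, k)) (s : 'rV[R]_k) :
  spd_mx A -> orthogonal_mx U -> V^T *m V = 1%:M ->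
  (forall i : 'I_k, A *m col i V = s 0 i *: col i V) ->
  in_E A (U *m diag_mx s *m V^T) (U *m diag_mx s *m U^T).
Proof.
move=> spdA [UU UUt] VV /eigen_colsP AV.
have s_gt0 i : 0 < s 0 i.
  have := spd_orthonormal_diag_gt0 i spdA VV.
  by rewrite -mulmxA AV mulmxA VV mul1mx mxE eqxx mulr1n.
have DDi := diag_mx_mulV (fun i => lt0r_neq0 (s_gt0 i)).
have DiD := mulmx1C DDi.
set D := diag_mx s in AV DDi DiD *; set Di := diag_mx _ in DDi DiD.
have VtA : V^T *m A = D *m V^T by rewrite -spdA.1 -trmx_mul AV trmx_mul tr_diag_mx.
have Minv : invmx (U *m D *m U^T) = U *m Di *m U^T.
  apply: mulmx1_invmx; rewrite !mulmxA -[_ *m U^T *m U]mulmxA UU mulmx1.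
  by rewrite -[U *m D *m Di]mulmxA DDi mulmx1 UUt.
have WAW : invmx (U *m D *m U^T) *m (U *m D *m V^T) *m A = U *m D *m V^T.
  rewrite Minv !mulmxA -[_ *m U^T *m U]mulmxA UU mulmx1.
  by rewrite -[U *m Di *m D]mulmxA DiD mulmx1 -mulmxA VtA mulmxA.
split; [exact: spd_orthogonal_diag | split => //].
rewrite WAW Minv !trmx_mul trmxK tr_diag_mx -/D !mulmxA.
rewrite -[_ *m V^T *m V]mulmxA VV mulmx1 -[_ *m U^T *m U]mulmxA UU mulmx1.
by rewrite -[_ *m D *m Di]mulmxA DDi mulmx1.
Qed.

End Equilibria.

Theorem lemma1 (R : realType) (n k : nat) (hk : (1 <= k)%N) (hkn : (k < n)%N)
    (tau : R) (htau : 0 < tau) (A : 'M[R]_n) (hA : spd_mx A)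
    (W : 'M[R]_(k, n)) (M : 'M[R]_k) :
  in_E A W M <->
  exists (U : 'M[R]_k) (V : 'M[R]_(n, k)) (s : 'rV[R]_k),
    [/\ orthogonal_mx U,
        V^T *m V = 1%:M,
        (forall i : 'I_k, A *m col i V = s 0 i *: col i V),
        W = U *m diag_mx s *m V^T
      & M = U *m diag_mx s *m U^T].
Proof.
split=> [|[U [V [s [oU VV AV -> ->]]]]]; first exact: equilibrium_spectral hA.1.
exact: spectral_equilibrium.
Qed.
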